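(* Consider Setting A (stated in the context), and suppose the sequence of communication graphs $\{\mathcal G[k]\}_{k\ge 0}$ satisfies conditions (C1), (C2) and (C3). Then for every desired rate $\rho\in(0,1)$ there exist observer gains $L_1,\dots,L_N$ (with $L_j$ of compatible dimensions, $L_j$ used by node $j$) such that, when all nodes run Algorithm 1, for every initial state $x[0]$ and all initial estimates there exist constants $c\ge 0$ and $K\in\mathbb N$ with $$\|\hat x_i[k]-x[k]\|\le c\,\rho^k\quad\text{for all }k\ge K\text{ and all }i\in\mathcal V,$$ where $\hat x_i[k]=T\hat z_i[k]$ and $\hat z_i[k]$ stacks $\hat z^{(1)}_i[k],\dots,\hat z^{(N)}_i[k]$.
   Context: Setting A. Consider the discrete-time LTI system $x[k+1]=Ax[k]$, $k\in\mathbb N$, with $A\in\mathbb R^{n\times n}$, monitored by $N$ nodes $\mathcal V=\{1,\dots,N\}$; node $i$ measures $y_i[k]=C_ix[k]$ with $C_i\in\mathbb R^{r_i\times n}$. Let $C=[C_1^T\ \cdots\ C_N^T]^T$ and assume $(A,C)$ is observable. Fix an invertible $T$ such that $\bar A=T^{-1}AT$ is block lower-triangular with diagonal blocks $A_{11},\dots,A_{NN}$ and off-diagonal blocks $A_{jq}$ ($q<j$), zero blocks above the diagonal, and $C_iT=[C_{i1}\ \cdots\ C_{ii}\ 0\ \cdots\ 0]$ for each $i$, with $(A_{jj},C_{jj})$ observable for every $j$ (such $T$ exists). With $z[k]=T^{-1}x[k]$ partitioned compatibly into sub-states $z^{(1)}[k],\dots,z^{(N)}[k]$, one has $z^{(j)}[k+1]=A_{jj}z^{(j)}[k]+\sum_{q=1}^{j-1}A_{jq}z^{(q)}[k]$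 and $y_j[k]=\sum_{q=1}^{j}C_{jq}z^{(q)}[k]$. Node $j$ is called the source node of sub-state $j$. Communication: at each time $k$ there is a directed graph $\mathcal G[k]=(\mathcal V,\mathcal E[k])$; $(l,i)\in\mathcal E[k]$ means $l$ can send to $i$ at time $k$; $\mathcal N_i[k]=\{l\neq i:(l,i)\in\mathcal E[k]\}$. The union graph over $[k_1,k_2]$ has vertex set $\mathcal V$ and edge set $\bigcup_{\tau=k_1}^{k_2}\mathcal E[\tau]$. Algorithm 1 (run for every sub-state $j$ simultaneously). Each node $i$ keeps an estimate $\hat z^{(j)}_i[k]$ (arbitrary initial value) and a freshness index $\tau^{(j)}_i[k]\in\mathbb N\cup\{\omega\}$, where $\omega$ is a special symbol; initially $\tau^{(j)}_j[0]=0$ and $\tau^{(j)}_i[0]=\omega$ for $i\ne j$. Source node $j$: $\tau^{(j)}_j[k]=0$ for all $k$, and $\hat z^{(j)}_j[k+1]=(A_{jj}-L_jC_{jj})\hat z^{(j)}_j[k]+\sum_{q=1}^{j-1}(A_{jq}-L_jC_{jq})\hat z^{(q)}_j[k]+L_jy_j[k]$, where $L_j$ is an observer gain. Non-source node $i\neq j$ at time $k$: let $\mathcal M^{(j)}_i[k]=\{l\in\mathcal N_i[k]:\tau^{(j)}_l[k]\neq\omega\}$; if $\tau^{(j)}_i[k]=\omega$ let $\mathcal F^{(j)}_i[k]=\mathcal M^{(j)}_i[k]$, otherwise $\mathcal F^{(j)}_i[k]=\{l\in\mathcal M^{(j)}_i[k]:\tau^{(j)}_l[k]<\tau^{(j)}_i[k]\}$.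 If $\mathcal F^{(j)}_i[k]\ne\emptyset$, pick $u\in\arg\min_{l\in\mathcal F^{(j)}_i[k]}\tau^{(j)}_l[k]$ and set $\tau^{(j)}_i[k+1]=\tau^{(j)}_u[k]+1$ and $\hat z^{(j)}_i[k+1]=A_{jj}\hat z^{(j)}_u[k]+\sum_{q=1}^{j-1}A_{jq}\hat z^{(q)}_i[k]$ (''$i$ adopts the information of $u$ at time $k$''). If $\mathcal F^{(j)}_i[k]=\emptyset$, set $\tau^{(j)}_i[k+1]=\omega$ if $\tau^{(j)}_i[k]=\omega$ and $\tau^{(j)}_i[k+1]=\tau^{(j)}_i[k]+1$ otherwise, and $\hat z^{(j)}_i[k+1]=A_{jj}\hat z^{(j)}_i[k]+\sum_{q=1}^{j-1}A_{jq}\hat z^{(q)}_i[k]$ (''$i$ adopts its own information''). Conditions on the graph sequence: there is an increasing sequence $\mathbb I=\{t_0,t_1,\dots\}\subset\mathbb N$ with $t_0=0$ such that, with $f(t_q)=t_{q+1}-t_q$: (C1) $f(t_q)$ is non-decreasing in $q$; (C2) with $m(k)=\max\{t_q\in\mathbb I:t_q\le k\}$ and $g(k)=f(m(k))$, one has $\limsup_{k\to\infty}\frac{2(N-1)g(k)}{k}=\delta<1$; (C3) for each $q$, the union graph over $[t_q,t_{q+1}-1]$ is strongly connected. *)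

From HB Require Import structures.
From mathcomp Require Import all_boot all_order all_algebra.
Set Implicit Arguments. Unset Strict Implicit. Unset Printing Implicit Defensive.
Import Order.TTheory GRing.Theory Num.Theory.
Local Open Scope ring_scope.

Definition obsv_mx (R : nzRingType) (m p : nat) (A : 'M[R]_m) (C : 'M[R]_(p, m))
  : 'M[R]_((\sum_(k < m) p)%N, m) :=
  @mxcol R m (fun _ => p) m (fun k => C *m A ^+ k).

Definition observable (R : fieldType) (m p : nat) (A : 'M[R]_m) (C : 'M[R]_(p, m))
  : bool := \rank (obsv_mx A C) == m.

Definition vnorm (R : rcfType) (m : nat) (v : 'cV[R]_m) : R :=
  Num.sqrt (\sum_(a < m) v a 0 ^+ 2).

Definition union_rel (N : nat) (E : nat -> rel 'I_N) (a b : nat) : rel 'I_N :=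
  fun l i => has (fun k => E k l i) (index_iota a b).

Definition strongly_connected (N : nat) (e : rel 'I_N) : Prop :=
  forall l i : 'I_N, connect e l i.

Definition fwin (t : nat -> nat) (q : nat) : nat := (t q.+1 - t q)%N.

(* index q of m(k) = max {t_q in I : t_q <= k}  (for increasing t with t 0 = 0,
   every such q satisfies q <= k) *)
Definition last_idx (t : nat -> nat) (k : nat) : nat :=
  (\max_(q < k.+1 | t q <= k) q)%N.

Definition gwin (t : nat -> nat) (k : nat) : nat := fwin t (last_idx t k).

(* limsup_{k -> oo} u k < a  (literal unfolding of limsup = inf_K sup_{k>=K}) *)
Definition limsup_lt (R : realFieldType) (u : nat -> R) (a : R) : Prop :=
  exists2 b, b < a & exists K, forall k, (K <= k)%N -> u k <= b.

Section Alg.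
Variables (R : fieldType) (N : nat) (d r : 'I_N -> nat).
Variable Ab : forall j q : 'I_N, 'M[R]_(d j, d q).   (* blocks A_jq of T^-1 A T *)
Variable Cb : forall i q : 'I_N, 'M[R]_(r i, d q).   (* blocks C_iq of C_i T *)
Variable L : forall j : 'I_N, 'M[R]_(d j, r j).
Variable y : nat -> forall j : 'I_N, 'cV[R]_(r j).
Variable E : nat -> rel 'I_N.                        (* E k l i : (l,i) in E[k] *)
Variable zh : nat -> 'I_N -> forall j : 'I_N, 'cV[R]_(d j).
  (* zh k i j = \hat z^{(j)}_i[k] *)
Variable tau : nat -> 'I_N -> 'I_N -> option nat.
  (* tau k i j = tau^{(j)}_i[k];  None encodes omega *)

Definition Fset (k : nat) (i j : 'I_N) : {set 'I_N} :=
  [set l | [&& E k l i, l != i &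
     match tau k l j, tau k i j with
     | Some _, None => true
     | Some tl, Some ti => (tl < ti)%N
     | None, _ => false
     end]].

Definition source_update (k : nat) (j : 'I_N) : 'cV[R]_(d j) :=
  (Ab j j - L j *m Cb j j) *m zh k j j
  + \sum_(q < N | (q < j)%N) (Ab j q - L j *m Cb j q) *m zh k j q
  + L j *m y k j.

(* node i takes sub-state-j information from node u (u = i : its own) *)
Definition adopt_update (k : nat) (i u j : 'I_N) : 'cV[R]_(d j) :=
  Ab j j *m zh k u j + \sum_(q < N | (q < j)%N) Ab j q *m zh k i q.

(* (zh, tau) is a run of Algorithm 1 (any tie-breaking choice of u is allowed) *)
Definition alg_run : Prop :=
  (forall i j : 'I_N, i != j -> tau 0%N i j = None) /\
  forall (k : nat) (j : 'I_N),
    tau k j j = Some 0%N /\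
    zh k.+1 j j = source_update k j /\
    forall i : 'I_N, i != j ->
      if Fset k i j == set0 then
        tau k.+1 i j = omap S (tau k i j) /\ zh k.+1 i j = adopt_update k i i j
      else
        exists2 u, u \in Fset k i j &
          [/\ forall l, l \in Fset k i j -> (odflt 0 (tau k u j) <= odflt 0 (tau k l j))%N,
              tau k.+1 i j = omap S (tau k u j) &
              zh k.+1 i j = adopt_update k i u j].
End Alg.

(* With deadbeat observer gains the estimates become exact in finite time, so
   the bound holds with [c = 0].  Observability of [(A_jj, C_jj)] yields [L_j]
   with [(A_jj - L_j C_jj)^d_j = 0], built along the subspaces
   [S_(k+1) = {v | v A in S_k + row H}] (row-vector convention).  By induction
   on [j]: once sub-states [q < j] are exact at every node, the source error of
   sub-state [j] is multiplied by [A_jj - L_j C_jj] at each step and vanishes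
   after [d_j] steps; an estimate built from information that left the source
   after that time is then exact, and strong connectivity of the union graph
   of each window [[t_q, t_(q+1))] adds at least one node to the set of nodes
   holding such information, so after [N] windows every node is exact. *)

From mathcomp Require Import all_boot all_order all_algebra.
From mathcomp Require Import zify.
Set Implicit Arguments. Unset Strict Implicit. Unset Printing Implicit Defensive.
Import Order.TTheory GRing.Theory Num.Theory.
Local Open Scope ring_scope.

Lemma submx_addsmx_residual (F : fieldType) (m a b c : nat)
    (U : 'M[F]_(a, m)) (V : 'M[F]_(b, m)) (W : 'M[F]_(c, m)) :
  (W <= U + V)%MS ->
  (W - W *m rsubmx (pinvmx (col_mx U V)) *m V <= U)%MS.
Proof.
rewrite addsmxE => /mulmxKpV; set P := pinvmx _ => WUV.
rewrite -{1}WUV -[P]hsubmxK mul_mx_row mul_row_col.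
by rewrite row_mxKr addrK submxMl.
Qed.

Section Deadbeat.
Variables (F : fieldType) (m p : nat) (A : 'M[F]_m) (H : 'M[F]_(p, m)).

Fixpoint deadbeat_space k : 'M[F]_m :=
  if k is k'.+1 then kermx (A *m cokermx (deadbeat_space k' + H)%MS) else 0.

Fixpoint obsv_space k : 'M[F]_m :=
  if k is k'.+1 then (obsv_space k' + H *m A ^+ k')%MS else 0.

Lemma sub_deadbeat_spaceS k n (v : 'M[F]_(n, m)) :
  (v <= deadbeat_space k.+1)%MS = (v *m A <= deadbeat_space k + H)%MS.
Proof. by rewrite /= sub_kermx submxE mulmxA. Qed.

Lemma obsv_space_sub_deadbeat k n (v : 'M[F]_(n, m)) :
  (v *m A ^+ k <= obsv_space k)%MS -> (v <= deadbeat_space k)%MS.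
Proof.
elim: k n v => [|k IHk] n v /=; first by rewrite expr0 mulmx1.
move=> /sub_addsmxP[w vAk]; rewrite sub_deadbeat_spaceS.
have vA_w : ((v *m A - w.2 *m H) *m A ^+ k <= obsv_space k)%MS.
  by rewrite mulmxBl -mulmxA -[A *m _]exprS vAk mulmxA -mulmxA addrK submxMl.
rewrite -(subrK (w.2 *m H) (v *m A)).
by rewrite addmx_sub_adds ?submxMl ?IHk.
Qed.

Lemma obsv_space_mono : {homo obsv_space : a b / (a <= b)%N >-> (a <= b)%MS}.
Proof.
apply: homo_leq => [//|? ? ?|k]; first exact: submx_trans.
exact: addsmxSl.
Qed.

Lemma deadbeat_space_mono :
  {homo deadbeat_space : a b / (a <= b)%N >-> (a <= b)%MS}.
Proof.
apply: homo_leq => [//|? ? ?|k]; first exact: submx_trans.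
elim: k => [|k IHk]; first exact: sub0mx.
rewrite sub_deadbeat_spaceS (submx_trans _ (addsmxS IHk (submx_refl H))) //.
by rewrite -sub_deadbeat_spaceS.
Qed.

Lemma deadbeat_space_full n (v : 'M[F]_(n, m)) :
  observable A H -> (v <= deadbeat_space m)%MS.
Proof.
move=> /eqP obsA; apply: obsv_space_sub_deadbeat; apply: submx_full.
have obsv_sub : (obsv_mx A H <= obsv_space m)%MS.
  apply/row_subP => i; rewrite /obsv_mx row_mxcol.
  apply: submx_trans (row_sub _ _) (submx_trans _ (obsv_space_mono (ltn_ord _))).
  exact: addsmxSr.
by rewrite /row_full eqn_leq rank_leq_col -{1}obsA mxrankS.
Qed.

Definition deadbeat_upto (L : 'M[F]_(m, p)) k := forall j, (j < k)%N ->
  forall v : 'M[F]_m, (v <= deadbeat_space j.+1)%MS ->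
  (v *m (A - L *m H) <= deadbeat_space j)%MS.

Lemma deadbeat_upto_stable L k (v : 'M[F]_m) : deadbeat_upto L k ->
  (v <= deadbeat_space k)%MS -> (v *m (A - L *m H) <= deadbeat_space k)%MS.
Proof.
case: k => [|k] hL; first by rewrite submx0 => /eqP->; rewrite mul0mx sub0mx.
move=> /(hL k (ltnSn k)) /submx_trans; apply.
exact: deadbeat_space_mono.
Qed.

Lemma complement_projection (U : 'M[F]_m) : exists2 P : 'M[F]_m,
  forall w : 'M[F]_m, (w <= U)%MS -> w *m P = 0 &
  forall w : 'M[F]_m, (w - w *m P <= U)%MS.
Proof.
exists (proj_mx U^C%MS U) => w; first by apply: proj_mx_0; rewrite capmxC capmx_compl.
by apply/proj_mx_compl_sub/submx_full; rewrite addsmxC addsmx_compl_full.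
Qed.

(* The correction vanishes on [S_k], so the lower levels are kept; for [v] in
   [S_(k+1)] it subtracts from [v P (A - L H)], which lies in [S_k + row H],
   its [row H]-component. *)
Lemma deadbeat_upto_step L k :
  deadbeat_upto L k -> exists L', deadbeat_upto L' k.+1.
Proof.
move=> hL; have [P P0 PU] := complement_projection (deadbeat_space k).
pose Q := rsubmx (pinvmx (col_mx (deadbeat_space k) H)).
exists (L + P *m ((A - L *m H) *m Q)) => j.
rewrite ltnS leq_eqVlt => /predU1P[->|ltjk] v hv.
- have vPS : (v *m P <= deadbeat_space k.+1)%MS.
    rewrite -[v *m P](subKr v) (addmx_sub hv) ?eqmx_opp //.
    exact: submx_trans (PU v) (deadbeat_space_mono (leqnSn k)).
  have -> : v *m (A - (L + P *m ((A - L *m H) *m Q)) *m H) =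
      (v - v *m P) *m (A - L *m H)
      + (v *m P *m (A - L *m H) - v *m P *m (A - L *m H) *m Q *m H).
    rewrite mulmxDl opprD addrA mulmxBr !mulmxA.
    by rewrite [in RHS]mulmxBl addrA subrK.
  rewrite addmx_sub ?deadbeat_upto_stable // submx_addsmx_residual //.
  rewrite mulmxBr addmx_sub //; first by move: vPS; rewrite sub_deadbeat_spaceS.
  by rewrite eqmx_opp mulmxA (submx_trans (submxMl _ _) (addsmxSr _ _)).
- have vS : (v <= deadbeat_space k)%MS.
    exact: submx_trans hv (deadbeat_space_mono ltjk).
  by rewrite mulmxDl opprD addrA mulmxBr !mulmxA P0 // !mul0mx subr0 hL.
Qed.

Lemma deadbeat_upto_nilpotent L k : deadbeat_upto L k ->
  forall j, (j <= k)%N -> forall v : 'M[F]_m, (v <= deadbeat_space j)%MS ->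
  v *m (A - L *m H) ^+ j = 0.
Proof.
move=> hL; elim=> [|j IHj] ltjk v; first by rewrite submx0 => /eqP->; rewrite mul0mx.
move=> hv; rewrite exprS mulmxE mulrA -mulmxE IHj //; first exact: ltnW.
exact: hL.
Qed.

Lemma deadbeat_gain : observable A H -> exists L, (A - L *m H) ^+ m = 0.
Proof.
move=> obsA; have gains k : exists L, deadbeat_upto L k.
  by elim: k => [|k [L hL]]; [exists 0 | exact: deadbeat_upto_step hL].
have [L hL] := gains m; exists L; rewrite -[_ ^+ m]mul1mx.
exact: deadbeat_upto_nilpotent hL _ (leqnn m) _ (deadbeat_space_full _ obsA).
Qed.

End Deadbeat.

Lemma connect_exit (T : finType) (e : rel T) (S : {set T}) x y :
  connect e x y -> x \in S -> y \notin S ->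
  exists a b, [/\ e a b, a \in S & b \notin S].
Proof.
move=> /connectP[s es ->] {y}; elim: s x es => [|z s IHs] x /=; first by move=> _ ->.
move=> /andP[exz es] xS; case zS: (z \in S); first exact: IHs.
by move=> _; exists x, z; rewrite zS.
Qed.

Section Freshness.
Variables (R : fieldType) (N : nat) (d r : 'I_N -> nat).
Variable Ab : forall j q : 'I_N, 'M[R]_(d j, d q).
Variable Cb : forall i q : 'I_N, 'M[R]_(r i, d q).
Variable L : forall j : 'I_N, 'M[R]_(d j, r j).
Variable y : nat -> forall j : 'I_N, 'cV[R]_(r j).
Variable E : nat -> rel 'I_N.
Variable zh : nat -> 'I_N -> forall j : 'I_N, 'cV[R]_(d j).
Variable tau : nat -> 'I_N -> 'I_N -> option nat.
Hypothesis run : alg_run Ab Cb L y E zh tau.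
Variable j : 'I_N.

Lemma freshness_self k i s : tau k i j = Some s ->
  exists2 s', tau k.+1 i j = Some s' & (s' <= s.+1)%N.
Proof.
case: run => _ /(_ k j)[_ [_ adopt]] tau_s.
have [->|nij] := eqVneq i j; first by case: run => _ /(_ k.+1 j)[-> _]; exists 0%N.
move: (adopt i nij); case: ifP => _ [].
  by move=> -> _; rewrite tau_s; exists s.+1.
move=> u; rewrite inE tau_s; case: (tau k u j) => [tu|] /and3P[_ _ //] ltu [_ -> _].
by exists tu.+1; last exact: ltnW.
Qed.

Lemma freshness_edge k l i s : E k l i -> l != i -> tau k l j = Some s ->
  exists2 s', tau k.+1 i j = Some s' & (s' <= s.+1)%N.
Proof.
move=> Eli nli tau_s; case: run => _ /(_ k j)[_ [_ adopt]].
have [->|nij] := eqVneq i j; first by case: run => _ /(_ k.+1 j)[-> _]; exists 0%N.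
have lF : l \in Fset E tau k i j = if tau k i j is Some ti then (s < ti)%N else true.
  by rewrite inE Eli nli tau_s /=; case: (tau k i j).
move: (adopt i nij); case: ifP => [/eqP F0 [-> _]|_ [u uF [u_min -> _]]].
  move: lF; rewrite F0 inE; case: (tau k i j) => [ti|] //= /esym/negbT.
  by rewrite -leqNgt; exists ti.+1.
move: (uF); rewrite inE; case tau_u: (tau k u j) => [tu|] /and3P[_ _ //] tu_lt.
exists tu.+1 => //; rewrite ltnS; case lF' : (l \in Fset E tau k i j).
  by move: (u_min l lF'); rewrite tau_u tau_s.
move: lF tu_lt; rewrite lF'; case: (tau k i j) => [ti|] //= /esym/negbT.
by rewrite -leqNgt => le_ti lt_tu; apply/ltnW/(leq_trans lt_tu).
Qed.

(* Node i holds sub-state j information that left the source at time >= K0. *)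
Definition informed K0 k i : bool :=
  if tau k i j is Some s then (K0 + s <= k)%N else false.

Lemma informed_self K0 k i : informed K0 k i -> informed K0 k.+1 i.
Proof.
rewrite /informed; case tau_s: (tau k i j) => [s|] //.
by have [s' -> le_s'] := freshness_self tau_s; lia.
Qed.

Lemma informed_edge K0 k l i :
  E k l i -> l != i -> informed K0 k l -> informed K0 k.+1 i.
Proof.
move=> Eli nli; rewrite /informed; case tau_s: (tau k l j) => [s|] //.
by have [s' -> le_s'] := freshness_edge Eli nli tau_s; lia.
Qed.

Lemma informed_source K0 k : (K0 <= k)%N -> informed K0 k j.
Proof. by case: run => _ /(_ k j)[tau_j _]; rewrite /informed tau_j addn0. Qed.

Lemma informed_mono K0 a b i :
  (a <= b)%N -> informed K0 a i -> informed K0 b i.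
Proof.
apply: (@homo_leq _ (informed K0 ^~ i) (fun P Q : bool => P -> Q)) => //.
  by move=> ? ? ? f g /f/g.
by move=> k; apply: informed_self.
Qed.

Definition informed_set K0 k : {set 'I_N} := [set i | informed K0 k i].

Lemma informed_set_mono K0 a b :
  (a <= b)%N -> informed_set K0 a \subset informed_set K0 b.
Proof. by move=> le_ab; apply/subsetP => i; rewrite !inE; apply: informed_mono. Qed.

Variable t : nat -> nat.
Hypothesis t_incr : forall q, (t q < t q.+1)%N.
Hypothesis window_connected :
  forall q, strongly_connected (union_rel E (t q) (t q.+1)).

Lemma informed_set_grows K0 q :
  informed_set K0 (t q) != set0 -> informed_set K0 (t q) != setT ->
  (#|informed_set K0 (t q)| < #|informed_set K0 (t q.+1)|)%N.
Proof.
move=> /set0Pn[x xI]; rewrite -properT => /properP[_ [z _ zI]].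
have [a [b [/hasP[k] + Ek aI bI]]] := connect_exit (window_connected q x z) xI zI.
rewrite mem_index_iota => /andP[tq_k k_tq1].
apply/proper_card; rewrite properE informed_set_mono /=; last exact: ltnW.
apply/subsetPn; exists b => //; rewrite inE.
apply: informed_mono k_tq1 _; apply: informed_edge Ek _ _.
  by apply: contraNneq bI => <-.
by move: aI; rewrite inE; apply: informed_mono.
Qed.

Lemma informed_set_card K0 q0 : (K0 <= t q0)%N ->
  forall n, (minn n.+1 N <= #|informed_set K0 (t (q0 + n))|)%N.
Proof.
move=> K0_t; elim=> [|n IHn].
  rewrite addn0 (leq_trans (geq_minl _ _)) // card_gt0.
  by apply/set0Pn; exists j; rewrite inE informed_source.
have sub_next := informed_set_mono K0 (ltnW (t_incr (q0 + n))).
rewrite -addnS in sub_next.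
have [allI|notT] := eqVneq (informed_set K0 (t (q0 + n))) setT.
  by move: sub_next; rewrite allI subTset => /eqP->; rewrite cardsT card_ord geq_minr.
have ne0 : informed_set K0 (t (q0 + n)) != set0.
  by rewrite -card_gt0 (leq_trans _ IHn) // leq_min (leq_ltn_trans _ (ltn_ord j)).
have := informed_set_grows ne0 notT; rewrite addnS; lia.
Qed.

Lemma eventually_informed K0 : exists K, forall k i, (K <= k)%N -> informed K0 k i.
Proof.
have t_ge q : (q <= t q)%N.
  by elim: q => [|q IHq] //; apply: leq_ltn_trans IHq (t_incr q).
exists (t (K0 + N)) => k i le_k; apply: informed_mono le_k _.
have /eqP allI : informed_set K0 (t (K0 + N)) == setT.
  rewrite eqEcard subsetT cardsT card_ord /=.
  by have := informed_set_card (t_ge K0) N; rewrite (minn_idPr (leqnSn N)).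
by have := in_setT i; rewrite -allI inE.
Qed.

End Freshness.

Lemma sum_ord_zero_above (V : nmodType) N (q : 'I_N) (F : 'I_N -> V) :
  (forall p : 'I_N, (q < p)%N -> F p = 0) ->
  \sum_(p < N) F p = F q + \sum_(p < N | (p < q)%N) F p.
Proof.
move=> F0; rewrite (bigD1 q) //=; congr (_ + _).
rewrite (bigID (fun p : 'I_N => (p < q)%N)) /= [X in _ + X]big1 ?addr0.
  by apply: eq_bigl => p; rewrite andb_idl // => /ltn_eqF; rewrite val_eqE => ->.
by move=> p; rewrite -leqNgt leq_eqVlt -val_eqE eq_sym => /andP[/negbTE-> /F0].
Qed.

Section LowerBlock.
Variables (R : pzRingType) (N : nat) (d : 'I_N -> nat).

Lemma submxcol_mul_lower (M : 'M[R]_(\sum_j d j)) (v : 'cV[R]_(\sum_j d j))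
    (q : 'I_N) :
  (forall p : 'I_N, (q < p)%N -> submxblock M q p = 0) ->
  submxcol (M *m v) q = submxblock M q q *m submxcol v q
    + \sum_(p < N | (p < q)%N) submxblock M q p *m submxcol v p.
Proof.
move=> M0; rewrite -{1}[M]submxblockK -{1}[v]submxcolK mul_mxblock_mxrow mxcolK.
by rewrite (sum_ord_zero_above (q := q)) // => p /M0->; rewrite mul0mx.
Qed.

Lemma mul_lower_mx (m : nat) (C : 'M[R]_(m, \sum_j d j))
    (v : 'cV[R]_(\sum_j d j)) (i : 'I_N) :
  (forall q : 'I_N, (i < q)%N -> submxrow C q = 0) ->
  C *m v = submxrow C i *m submxcol v i
    + \sum_(p < N | (p < i)%N) submxrow C p *m submxcol v p.
Proof.
move=> C0; rewrite -{1}[C]submxrowK -{1}[v]submxcolK mul_mxrow_mxcol.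
by rewrite (sum_ord_zero_above (q := i)) // => p /C0->; rewrite mul0mx.
Qed.

End LowerBlock.

Section Estimation.
Variables (R : fieldType) (N : nat) (d r : 'I_N -> nat).
Variable Ab : forall j q : 'I_N, 'M[R]_(d j, d q).
Variable Cb : forall i q : 'I_N, 'M[R]_(r i, d q).
Variable L : forall j : 'I_N, 'M[R]_(d j, r j).
Variable y : nat -> forall j : 'I_N, 'cV[R]_(r j).
Variable E : nat -> rel 'I_N.
Variable zh : nat -> 'I_N -> forall j : 'I_N, 'cV[R]_(d j).
Variable tau : nat -> 'I_N -> 'I_N -> option nat.
Hypothesis run : alg_run Ab Cb L y E zh tau.

Variable z : nat -> forall j : 'I_N, 'cV[R]_(d j).
Hypothesis z_next : forall k j, z k.+1 j =
  Ab j j *m z k j + \sum_(q < N | (q < j)%N) Ab j q *m z k q.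
Hypothesis y_out : forall k j, y k j =
  Cb j j *m z k j + \sum_(q < N | (q < j)%N) Cb j q *m z k q.
Hypothesis gain_deadbeat : forall j, (Ab j j - L j *m Cb j j) ^+ d j = 0.

Variable t : nat -> nat.
Hypothesis t_incr : forall q, (t q < t q.+1)%N.
Hypothesis window_connected :
  forall q, strongly_connected (union_rel E (t q) (t q.+1)).

Definition exact_below K n := forall (q : 'I_N) k i,
  (q < n)%N -> (K <= k)%N -> zh k i q = z k q.

Lemma source_error_next k (j : 'I_N) :
  (forall q : 'I_N, (q < j)%N -> zh k j q = z k q) ->
  zh k.+1 j j - z k.+1 j = (Ab j j - L j *m Cb j j) *m (zh k j j - z k j).
Proof.
move=> exact_q; case: run => _ /(_ k j)[_ [-> _]].
rewrite /source_update z_next y_out.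
under eq_bigr => q lt_qj do rewrite exact_q // mulmxBl.
rewrite sumrB mulmxDr mulmx_sumr mulmxA.
under [X in _ + (_ + X) - _]eq_bigr do rewrite mulmxA.
rewrite [RHS]mulmxBr [(_ - _) *m z k j]mulmxBl.
by rewrite addrACA subrK opprD addrACA subrr addr0 opprB addrA.
Qed.

Lemma adopt_update_exact k i u (j : 'I_N) :
  (forall q : 'I_N, (q < j)%N -> zh k i q = z k q) -> zh k u j = z k j ->
  adopt_update Ab zh k i u j = z k.+1 j.
Proof.
move=> exact_i exact_u; rewrite /adopt_update exact_u z_next; congr (_ + _).
by apply: eq_bigr => q lt_qj; rewrite exact_i.
Qed.

Lemma source_exact K (j : 'I_N) : exact_below K j ->
  forall k, (K + d j <= k)%N -> zh k j j = z k j.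
Proof.
move=> exact_K; set M := Ab j j - L j *m Cb j j.
have err n : zh (K + n) j j - z (K + n) j = M ^+ n *m (zh K j j - z K j).
  elim: n => [|n IHn]; first by rewrite addn0 expr0 mul1mx.
  rewrite addnS source_error_next => [|q lt_qj]; last exact: exact_K (leq_addr _ _).
  by rewrite IHn mulmxA exprS mulmxE.
move=> k le_k; apply/eqP; rewrite -subr_eq0 -(subnKC (leq_trans (leq_addr _ _) le_k)).
have -> : (k - K = k - K - d j + d j)%N by lia.
by rewrite err exprD gain_deadbeat mulr0 mul0mx.
Qed.

Lemma informed_exact K (j : 'I_N) : exact_below K j ->
  forall k i, informed tau j (K + d j) k i -> zh k i j = z k j.
Proof.
move=> exact_K; have [tau0 run_k] := run.
elim=> [|k IHk] i.
  have [->|nij] := eqVneq i j; last by rewrite /informed tau0.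
  by rewrite /informed (run_k 0%N j).1 addn0 => /(source_exact exact_K).
have [->|nij] := eqVneq i j.
  by rewrite /informed (run_k k.+1 j).1 addn0 => /(source_exact exact_K).
have adopt u : tau k.+1 i j = omap S (tau k u j) ->
    zh k.+1 i j = adopt_update Ab zh k i u j ->
    informed tau j (K + d j) k.+1 i -> zh k.+1 i j = z k.+1 j.
  rewrite /informed => -> ->; case tau_u: (tau k u j) => [s|] //= le_k.
  apply: adopt_update_exact => [q lt_qj|]; first by apply: exact_K; lia.
  by apply: IHk; rewrite /informed tau_u; lia.
have := (run_k k j).2.2 i nij; case: ifP => _ [].
  exact: adopt.
by move=> u _ [_]; apply: adopt.
Qed.

Lemma exact_below_next K (j : 'I_N) :
  exact_below K j -> exists K', exact_below K' j.+1.
Proof.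
move=> exact_K.
have [K1 informed_K1] := eventually_informed run j t_incr window_connected (K + d j).
exists (maxn K K1) => q k i; rewrite ltnS leq_eqVlt => /predU1P[/val_inj->|lt_qj] le_k.
  by apply: informed_exact exact_K _ _ _; apply: informed_K1; lia.
by apply: exact_K => //; lia.
Qed.

Lemma estimates_exact : exists K, forall k i j, (K <= k)%N -> zh k i j = z k j.
Proof.
have exact_all n : exists K, exact_below K n.
  elim: n => [|n [K exact_K]]; first by exists 0%N.
  have [ltnN|geNn] := ltnP n N.
    exact: (exact_below_next (j := Ordinal ltnN) exact_K).
  by exists K => q k i lt_qn; apply: exact_K; apply: leq_trans (ltn_ord q) geNn.
by have [K exact_K] := exact_all N; exists K => k i j; apply: exact_K.
Qed.

End Estimation.

Lemma vnorm0 (R : rcfType) (m : nat) : vnorm (0 : 'cV[R]_m) = 0.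
Proof. by rewrite /vnorm big1 ?sqrtr0 // => a _; rewrite mxE expr2 mulr0. Qed.

Unset Implicit Arguments. Set Strict Implicit.

Theorem theorem1 (R : archiRcfType) (N : nat) (d r : 'I_N -> nat)
  (A : 'M[R]_(\sum_(j < N) d j))
  (Cs : forall i : 'I_N, 'M[R]_(r i, \sum_(j < N) d j))
  (T : 'M[R]_(\sum_(j < N) d j))
  (hobs : observable A (mxcol Cs))
  (hT : T \in unitmx)
  (htri : forall j q : 'I_N, (j < q)%N ->
            submxblock (invmx T *m A *m T) j q = 0)
  (hCT : forall i q : 'I_N, (i < q)%N -> submxrow (Cs i *m T) q = 0)
  (hobsj : forall j : 'I_N,
     observable (submxblock (invmx T *m A *m T) j j) (submxrow (Cs j *m T) j))
  (E : nat -> rel 'I_N) (t : nat -> nat)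
  (ht0 : t 0%N = 0%N) (htinc : forall q, (t q < t q.+1)%N)
  (hC1 : forall q, (fwin t q <= fwin t q.+1)%N)
  (hC2 : limsup_lt (fun k => (2 * N.-1 * gwin t k)%:R / k%:R : R) 1)
  (hC3 : forall q, strongly_connected (union_rel E (t q) (t q.+1)))
  (rho : R) (hrho : 0 < rho < 1) :
  exists L : forall j : 'I_N, 'M[R]_(d j, r j),
    forall (x : nat -> 'cV[R]_(\sum_(j < N) d j))
           (zh : nat -> 'I_N -> forall j : 'I_N, 'cV[R]_(d j))
           (tau : nat -> 'I_N -> 'I_N -> option nat),
      (forall k, x k.+1 = A *m x k) ->
      alg_run (fun j q => submxblock (invmx T *m A *m T) j q)
              (fun i q => submxrow (Cs i *m T) q)
              L (fun k j => Cs j *m x k) E zh tau ->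
      exists c : R, exists K : nat, 0 <= c /\
        forall (k : nat) (i : 'I_N), (K <= k)%N ->
          vnorm (T *m mxcol (zh k i) - x k) <= c * rho ^+ k.
Proof.
have [L gainL] := fin_all_exists (fun j => deadbeat_gain (hobsj j)).
exists L => x zh tau hx run.
pose z k := submxcol (invmx T *m x k).
have z_next k (j : 'I_N) : z k.+1 j = submxblock (invmx T *m A *m T) j j *m z k j
    + \sum_(q < N | (q < j)%N) submxblock (invmx T *m A *m T) j q *m z k q.
  rewrite -submxcol_mul_lower; last exact: htri.
  by rewrite /z hx -!mulmxA (mulKVmx hT).
have y_out k (j : 'I_N) : Cs j *m x k = submxrow (Cs j *m T) j *m z k j
    + \sum_(q < N | (q < j)%N) submxrow (Cs j *m T) q *m z k q.
  rewrite -mul_lower_mx; last exact: hCT.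
  by rewrite -mulmxA (mulKVmx hT).
have [K exact_K] := estimates_exact run z_next y_out gainL htinc hC3.
exists 0, K; split => // k i le_k.
have -> : mxcol (zh k i) = invmx T *m x k.
  by rewrite -[RHS]submxcolK; apply: eq_mxcol => j; apply: exact_K.
by rewrite (mulKVmx hT) subrr vnorm0 mul0r.
Qed.
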